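(* Let $G$ be a weighted graph, $s\in[0,1]^V$ a vector of innate opinions, $z=(I+L)^{-1}s$ the equilibrium opinions, and $P=P(z)$. Let $k\in\mathbb{N}$ and let $s'\in[0,1]^V$ satisfy $\|s'-s\|_0\le k$. Let $z'=(I+L)^{-1}s'$ and $P'=P(z')$. Then $P'\le P+3k$.
   Context: $G=(V,E,w)$ is a weighted undirected graph on $n=|V|$ vertices, with weights $w_{u,v}\in(0,1]$ for $(u,v)\in E$ and $w_{u,v}=0$ otherwise (and $w_{v,v}=0$). $L=\mathrm{Diag}(d)-A$ is the weighted Laplacian, where $A_{u,v}=w_{u,v}$ and $d_v=\sum_u w_{v,u}$. Polarization of a vector $z\in\mathbb{R}^V$ is $P(z)=\sum_{v\in V}(z_v-\bar z)^2$ with $\bar z=\frac1n\sum_v z_v$. $\|x\|_0$ denotes the number of nonzero coordinates of $x$. *)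

From HB Require Import structures.
From mathcomp Require Import all_boot all_order all_algebra.
Set Implicit Arguments. Unset Strict Implicit. Unset Printing Implicit Defensive.
Import Order.TTheory GRing.Theory Num.Theory.
Local Open Scope ring_scope.

(* A weighted undirected graph: w u v in (0,1] on edges, 0 otherwise,
   symmetric, zero diagonal. Equivalently: symmetric, zero diagonal, entries in [0,1]. *)
Definition weighted_graph (R : realFieldType) (n : nat) (w : 'M[R]_n) : Prop :=
  (forall u v : 'I_n, w u v = w v u) /\
  (forall v : 'I_n, w v v = 0) /\
  (forall u v : 'I_n, 0 <= w u v <= 1).

Definition degree (R : realFieldType) (n : nat) (w : 'M[R]_n) (v : 'I_n) : R :=
  \sum_(u < n) w v u.

Definition laplacian (R : realFieldType) (n : nat) (w : 'M[R]_n) : 'M[R]_n :=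
  diag_mx (\row_v degree w v) - w.

Definition equilibrium (R : realFieldType) (n : nat) (w : 'M[R]_n) (s : 'cV[R]_n)
  : 'cV[R]_n := invmx (1%:M + laplacian w) *m s.

Definition mean (R : realFieldType) (n : nat) (z : 'cV[R]_n) : R :=
  (\sum_(v < n) z v 0) / n%:R.

Definition polarization (R : realFieldType) (n : nat) (z : 'cV[R]_n) : R :=
  \sum_(v < n) (z v 0 - mean z) ^+ 2.

Definition l0norm (R : realFieldType) (n : nat) (x : 'cV[R]_n) : nat :=
  #|[set v : 'I_n | x v 0 != 0]|.

Definition unit_cube (R : realFieldType) (n : nat) (s : 'cV[R]_n) : Prop :=
  forall v : 'I_n, 0 <= s v 0 <= 1.

From HB Require Import structures.
From mathcomp Require Import all_boot all_order all_algebra.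
From mathcomp Require Import ring lra.
Set Implicit Arguments. Unset Strict Implicit. Unset Printing Implicit Defensive.
Import Order.TTheory GRing.Theory Num.Theory.
Local Open Scope ring_scope.

(* Write z = (I + L)^-1 s and b = (I + L)^-1 (s' - s), so that z' = z + b and
   P(z') = P(z) + 2 <z - mean z, b> + P(b).  Since I + L is symmetric, the
   cross term equals <(I + L)^-1 (z - mean z), s' - s>; by the maximum principle
   (I + L)^-1 maps [0,1]^V into itself and fixes constants, so every coordinate
   of the left factor lies in [-1,1], and s' - s has at most k nonzero
   coordinates, all in [-1,1]: the cross term is at most k.  Finally
   P(b) <= |b|^2 <= <b, (I + L) b> = <b, s' - s> <= |b| |s' - s|, whence
   P(b) <= |s' - s|^2 <= k. *)

Definition vdot (R : comPzRingType) (n : nat) (x y : 'cV[R]_n) : R :=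
  \sum_i x i 0 * y i 0.

Section VectorDot.
Variables (R : comPzRingType) (n : nat).
Implicit Types (x y z : 'cV[R]_n) (A : 'M[R]_n).

Lemma vdotDr x y z : vdot x (y + z) = vdot x y + vdot x z.
Proof. by rewrite /vdot -big_split; apply: eq_bigr => i _; rewrite mxE mulrDr. Qed.

Lemma vdot_mulmx A x y : vdot x (A *m y) = vdot (A^T *m x) y.
Proof.
rewrite /vdot.
under eq_bigr do rewrite mxE mulr_sumr.
under [RHS]eq_bigr do rewrite mxE mulr_suml.
rewrite exchange_big; apply: eq_bigr => i _; apply: eq_bigr => j _.
by rewrite mxE mulrCA mulrA.
Qed.

End VectorDot.

Section RealVectorDot.
Variables (R : realFieldType) (n : nat).
Implicit Types (x y : 'cV[R]_n).

Lemma vdot_eq0 x : vdot x x = 0 -> x = 0.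
Proof.
move=> x0; apply/matrixP => i j; rewrite (ord1 j) mxE.
have sq_ge0 v : true -> 0 <= x v 0 * x v 0 by rewrite -expr2 sqr_ge0.
by apply/eqP; rewrite -sqrf_eq0 expr2 (psumr_eq0P sq_ge0 x0).
Qed.

Lemma vdot_le_l0norm x y :
  (forall v, `|x v 0| <= 1) -> (forall v, `|y v 0| <= 1) ->
  vdot x y <= (l0norm y)%:R.
Proof.
move=> x1 y1; rewrite /vdot /l0norm -sumr_const [X in _ <= X]big_mkcond /=.
apply: ler_sum => v _; rewrite inE.
have [->|_] := eqP; first by rewrite mulr0.
apply: le_trans (ler_norm _) _; rewrite normrM.
exact: mulr_ile1 (x1 v) (y1 v).
Qed.

End RealVectorDot.

Lemma norm_subr_le1 (R : realDomainType) (a b : R) :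
  0 <= a <= 1 -> 0 <= b <= 1 -> `|a - b| <= 1.
Proof. by move=> /andP[? ?] /andP[? ?]; rewrite ler_norml; apply/andP; split; lra. Qed.

Section Laplacian.
Variables (R : realFieldType) (n : nat) (w : 'M[R]_n).
Implicit Types (x y t : 'cV[R]_n).

Lemma laplacian_mulE x i :
  (laplacian w *m x) i 0 = \sum_j w i j * (x i 0 - x j 0).
Proof.
rewrite /laplacian mulmxBl mul_diag_mx !mxE /degree mulr_suml -sumrB.
by apply: eq_bigr => j _; rewrite mulrBr.
Qed.

Lemma laplacian_const c : laplacian w *m (const_mx c : 'cV_n) = 0.
Proof.
apply/matrixP => i j; rewrite (ord1 j) laplacian_mulE !mxE big1 // => u _.
by rewrite !mxE subrr mulr0.
Qed.

Definition opinion_matrix := 1%:M + laplacian w.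

Lemma opinion_mulE x i :
  (opinion_matrix *m x) i 0 = x i 0 + \sum_j w i j * (x i 0 - x j 0).
Proof. by rewrite mulmxDl mul1mx mxE laplacian_mulE. Qed.

Lemma equilibriumE s : equilibrium w s = invmx opinion_matrix *m s.
Proof. by []. Qed.

Lemma equilibriumD s t : equilibrium w (s + t) = equilibrium w s + equilibrium w t.
Proof. exact: mulmxDr. Qed.

Lemma equilibriumB s t : equilibrium w (s - t) = equilibrium w s - equilibrium w t.
Proof. exact: mulmxBr. Qed.

Hypothesis w_sym : forall u v, w u v = w v u.
Hypothesis w_ge0 : forall u v, 0 <= w u v.

Lemma laplacian_quad x :
  vdot x (laplacian w *m x) *+ 2 = \sum_i \sum_j w i j * (x i 0 - x j 0) ^+ 2.
Proof.
have -> : vdot x (laplacian w *m x) =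
    \sum_i \sum_j w i j * (x i 0 * (x i 0 - x j 0)).
  apply: eq_bigr => i _; rewrite laplacian_mulE mulr_sumr.
  by apply: eq_bigr => j _; rewrite mulrCA.
rewrite mulr2n {1}exchange_big -big_split; apply: eq_bigr => i _.
rewrite -big_split; apply: eq_bigr => j _ /=.
by rewrite (w_sym j i); ring.
Qed.

Lemma laplacian_psd x : 0 <= vdot x (laplacian w *m x).
Proof.
rewrite -(pmulrn_lge0 _ (ltn0Sn 1)) laplacian_quad.
by do 2![apply: sumr_ge0 => ? _]; rewrite mulr_ge0 ?sqr_ge0.
Qed.

Lemma opinion_matrix_tr : opinion_matrix^T = opinion_matrix.
Proof.
apply/matrixP => i j; rewrite !mxE /degree eq_sym w_sym.
by case: eqP => // ->.
Qed.

Lemma vdot_opinion_ge x : vdot x x <= vdot x (opinion_matrix *m x).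
Proof. by rewrite mulmxDl mul1mx vdotDr lerDl laplacian_psd. Qed.

Lemma opinion_matrix_unit : opinion_matrix \in unitmx.
Proof.
rewrite unitmxE unitfE; apply/negP => /det0P[v /negP v_neq0 vM0].
apply: v_neq0; rewrite -[v]trmxK -[0]trmx0; apply/eqP; congr trmx.
apply: vdot_eq0; apply: le_anti; apply/andP; split.
  rewrite (le_trans (vdot_opinion_ge _)) //.
  rewrite -opinion_matrix_tr -trmx_mul vM0 trmx0 /vdot big1 // => i _.
  by rewrite !mxE mulr0.
by apply: sumr_ge0 => i _; rewrite -expr2 sqr_ge0.
Qed.

(* Discrete minimum principle: at a vertex where y is minimal, the Laplacian
   term of (I + L) y is nonpositive. *)
Lemma opinion_lb t y lo :
  opinion_matrix *m y = t -> (forall v, lo <= t v 0) -> forall v, lo <= y v 0.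
Proof.
move=> My t_ge v.
have [m _ m_min] := arg_minP (fun i => y i 0) (isT : predT v).
apply: le_trans (m_min v isT); apply: le_trans (t_ge m) _.
rewrite -My opinion_mulE gerDl; apply: sumr_le0 => j _.
by rewrite mulr_ge0_le0 // subr_le0 m_min.
Qed.

Lemma equilibrium_cube s : unit_cube s -> unit_cube (equilibrium w s).
Proof.
move=> s01 v; have Ms := mulKVmx opinion_matrix_unit s.
have Mns : opinion_matrix *m (- equilibrium w s) = - s by rewrite mulmxN Ms.
apply/andP; split; first by apply: (opinion_lb Ms) => u; case/andP: (s01 u).
have := opinion_lb Mns (lo := -1) _ v; rewrite mxE lerN2; apply=> u.
by rewrite mxE lerN2; case/andP: (s01 u).
Qed.

Lemma equilibrium_const c : equilibrium w (const_mx c) = const_mx c :> 'cV_n.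
Proof.
have Mc : opinion_matrix *m const_mx c = const_mx c :> 'cV_n.
  by rewrite mulmxDl mul1mx laplacian_const addr0.
by rewrite equilibriumE -{1}Mc mulKmx ?opinion_matrix_unit.
Qed.

Lemma vdot_equilibrium x y : vdot x (equilibrium w y) = vdot (equilibrium w x) y.
Proof. by rewrite equilibriumE vdot_mulmx trmx_inv opinion_matrix_tr. Qed.

Lemma vdot_equilibrium_le s :
  vdot (equilibrium w s) (equilibrium w s) <= vdot s s.
Proof.
set b := equilibrium w s.
have Mb : opinion_matrix *m b = s by rewrite mulKVmx ?opinion_matrix_unit.
have bb_le := vdot_opinion_ge b; rewrite Mb in bb_le.
suff : vdot b s *+ 2 <= vdot b b + vdot s s by lra.
rewrite /vdot -big_split -sumrMnl; apply: ler_sum => v _ /=.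
have -> : b v 0 * b v 0 + s v 0 * s v 0 = (b v 0 - s v 0) ^+ 2 + b v 0 * s v 0 *+ 2.
  by ring.
by rewrite lerDr sqr_ge0.
Qed.

End Laplacian.

Section Polarization.
Variables (R : realFieldType) (n : nat).
Implicit Types (x y : 'cV[R]_n.+1).

Lemma sum_sub_mean x : \sum_v (x v 0 - mean x) = 0.
Proof.
by rewrite sumrB sumr_const card_ord /mean -[_ *+ n.+1]mulr_natr divfK ?subrr ?pnatr_eq0.
Qed.

Lemma meanD x y : mean (x + y) = mean x + mean y.
Proof.
by rewrite /mean -mulrDl -big_split; congr (_ / _); apply: eq_bigr => v _; rewrite mxE.
Qed.

Lemma polarizationD x y : polarization (x + y) =
  polarization x + vdot (x - const_mx (mean x)) y *+ 2 + polarization y.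
Proof.
have -> : vdot (x - const_mx (mean x)) y =
    \sum_v (x v 0 - mean x) * (y v 0 - mean y).
  under [RHS]eq_bigr do rewrite mulrBr.
  rewrite sumrB -mulr_suml sum_sub_mean mul0r subr0.
  by apply: eq_bigr => v _; rewrite !mxE.
rewrite /polarization meanD -sumrMnl -!big_split; apply: eq_bigr => v _ /=.
by rewrite mxE; ring.
Qed.

Lemma vdot_polarization y : vdot y y = polarization y + mean y ^+ 2 *+ n.+1.
Proof.
rewrite /vdot /polarization.
transitivity (\sum_v ((y v 0 - mean y) ^+ 2 + mean y * (y v 0 - mean y) *+ 2
                      + mean y ^+ 2)).
  by apply: eq_bigr => v _; ring.
rewrite 2!big_split /= sumrMnl -mulr_sumr sum_sub_mean mulr0 mul0rn addr0.
by rewrite sumr_const card_ord.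
Qed.

Lemma polarization_le_vdot y : polarization y <= vdot y y.
Proof. by rewrite vdot_polarization lerDl mulrn_wge0 ?sqr_ge0. Qed.

Lemma mean_cube x : unit_cube x -> 0 <= mean x <= 1.
Proof.
move=> x01; rewrite /mean divr_ge0 ?ler0n ?sumr_ge0 //=; last first.
  by move=> v _; case/andP: (x01 v).
rewrite ler_pdivrMr ?ltr0Sn // mul1r -[X in _ <= X%:R]card_ord -sumr_const.
by apply: ler_sum => v _; case/andP: (x01 v).
Qed.

End Polarization.

Theorem theorem1p2 (R : realFieldType) (n : nat) (w : 'M[R]_n)
  (s s' : 'cV[R]_n) (k : nat) :
  weighted_graph w -> unit_cube s -> unit_cube s' ->
  (l0norm (s' - s) <= k)%N ->
  polarization (equilibrium w s') <= polarization (equilibrium w s) + k%:R *+ 3.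
Proof.
case: n w s s' => [|n] w s s' [w_sym [_ w01]] s01 s'01 supp_k.
  by rewrite /polarization !big_ord0 add0r mulrn_wge0.
have w_ge0 u v : 0 <= w u v by case/andP: (w01 u v).
set z := equilibrium w s; set b := equilibrium w (s' - s).
have z01 : unit_cube z by apply: equilibrium_cube.
have d1 v : `|(s' - s) v 0| <= 1 by rewrite !mxE norm_subr_le1.
have dd_le : vdot (s' - s) (s' - s) <= k%:R.
  by rewrite (le_trans (vdot_le_l0norm d1 d1)) ?ler_nat.
have cross_le : vdot (z - const_mx (mean z)) b <= k%:R.
  rewrite vdot_equilibrium // equilibriumB equilibrium_const //.
  apply: le_trans (vdot_le_l0norm _ d1) _; last by rewrite ler_nat.
  move=> v; have -> : (equilibrium w z - const_mx (mean z)) v 0 =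
                      equilibrium w z v 0 - mean z by rewrite !mxE.
  by rewrite norm_subr_le1 ?mean_cube ?(equilibrium_cube _ _ z01).
have quad_le : polarization b <= k%:R.
  apply: le_trans (polarization_le_vdot b) _.
  exact: le_trans (vdot_equilibrium_le w_sym w_ge0 _) dd_le.
have -> : equilibrium w s' = z + b by rewrite -equilibriumD addrC subrK.
rewrite polarizationD; lra.
Qed.
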